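(* Let $G'$ be a connected graph and $x,v\in V(G')$ distinct vertices with $N_{G'}[x]\subseteq N_{G'}[v]$. Let $T$ be a search tree on $G=G'-x$ and $i\in\{0,\ldots,d_{T,v}\}$. Then $T(i,x,v)$ is a search tree on $G'$. Moreover, the vertices $T(i,x,v)$, $i\in\{0,\ldots,d_{T,v}\}$, lie on a path in $\mathcal{R}(G')$.
   Context: $N[\cdot]$ denotes the closed neighbourhood. For a connected graph $G$, a search tree on $G$ is a rooted tree with vertex set $V(G)$ defined recursively: its root is some vertex $r\in V(G)$, and the children of $r$ are the roots of search trees on the connected components of $G-r$. For a rooted tree $T$ and $w\in V(T)$, $T|w$ denotes the subtree rooted at $w$ and $d_{T,w}$ the distance from the root to $w$. Let $T$ be a search tree on $G$, let $b$ be a child of $a$ in $T$, and let $p$ be the parent of $a$ (if it exists). The $ab$-rotation transforms $T$ into the search tree $T'$ in which: $a$ is a child of $b$ and $b$ is a child of $p$ (or $b$ is the root if $a$ was the root); every subtree of $a$ in $T$ other than $T|b$ is a subtree of $a$ in $T'$; and every subtree $S$ of $b$ in $T$ is a subtree of $a$ in $T'$ if $a$ is adjacent in $G$ to some vertex of $S$, and a subtree of $b$ in $T'$ otherwise. The rotation graph $\mathcal{R}(G)$ has the search trees on $G$ as vertices, two adjacent iff they differ by one rotation. Insertion: for a rooted tree $T$, $v\in V(T)$ with $d=d_{T,v}$ and root-to-$v$ path $a_0,\ldots,a_d=v$, and $x\notin V(T)$: $T(0,x,v)$ has $x$ as new root with $T$ as its only subtree; for $1\le i\le d$, $T(i,x,v)$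 is obtained by subdividing the edge $a_{i-1}a_i$ with the new vertex $x$ (root unchanged). *)

(* Graphs are simple graphs given by a symmetric irreflexive
   relation e on a finite type V; a vertex subset S : {set V} denotes the
   induced subgraph G[S]. *)
From mathcomp Require Import all_boot.
Set Implicit Arguments. Unset Strict Implicit. Unset Printing Implicit Defensive.

Section Defs.
Variable V : finType.

Definition closed_nbhd (e : rel V) (x : V) : {set V} :=
  [set y | (y == x) || e x y].

Definition restrict_rel (e : rel V) (C : {set V}) : rel V :=
  [rel a b | [&& e a b, a \in C & b \in C]].
Definition conn (e : rel V) (C : {set V}) : Prop :=
  forall u w, u \in C -> w \in C -> connect (restrict_rel e C) u w.

Definition component (e : rel V) (S C : {set V}) : Prop :=
  [/\ C \subset S, C != set0, conn e C &
      forall D : {set V}, C \subset D -> D \subset S -> conn e D -> D = C].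

(* Rooted trees with vertices in V: a root and a parent function
   (None for the root and for vertices not in the tree). *)
Definition rtree : Type := (V * {ffun V -> option V})%type.
Definition rroot (t : rtree) : V := t.1.
Definition rpar (t : rtree) : V -> option V := fun u => t.2 u.

Definition vset (t : rtree) : {set V} :=
  [set u | (u == rroot t) || (rpar t u != None)].

Fixpoint upk (t : rtree) (k : nat) (u : V) : option V :=
  match k with 0 => Some u | k'.+1 => obind (rpar t) (upk t k' u) end.

Definition is_rtree (t : rtree) : Prop :=
  rpar t (rroot t) = None /\
  forall u, u \in vset t -> exists k, upk t k u = Some (rroot t).

Definition desc (t : rtree) (w : V) : {set V} :=
  [set u | [exists k : 'I_#|V|.+1, upk t k u == Some w]].

Definition subtree (t : rtree) (w : V) : rtree :=
  (w, [ffun u => if (u \in desc t w) && (u != w) then rpar t u else None]).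

Inductive search_tree (e : rel V) : {set V} -> rtree -> Prop :=
| SearchTree (S : {set V}) (t : rtree) :
    is_rtree t -> vset t = S -> conn e S ->
    (forall c, rpar t c = Some (rroot t) ->
        component e (S :\ rroot t) (desc t c) /\
        search_tree e (desc t c) (subtree t c)) ->
    (forall C, component e (S :\ rroot t) C ->
        exists c, rpar t c = Some (rroot t) /\ desc t c = C) ->
    search_tree e S t.

Fixpoint ups (t : rtree) (n : nat) (u : V) : seq V :=
  match n with
  | 0 => [:: u]
  | n'.+1 => if rpar t u is Some w then u :: ups t n' w else [:: u]
  end.

(* root-to-v path a_0, ..., a_d = v and the depth d = d_{T,v} *)
Definition rpath (t : rtree) (v : V) : seq V := rev (ups t #|V| v).
Definition depth (t : rtree) (v : V) : nat := (size (rpath t v)).-1.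

Definition insert (t : rtree) (i : nat) (x v : V) : rtree :=
  if i == 0 then
    (x, [ffun u => if u == x then None
                   else if u == rroot t then Some x else rpar t u])
  else
    let ai := nth v (rpath t v) i in
    let ai1 := nth v (rpath t v) i.-1 in
    (rroot t, [ffun u => if u == x then Some ai1
                         else if u == ai then Some x else rpar t u]).

Definition rotate (e : rel V) (t : rtree) (a b : V) : rtree :=
  (if rroot t == a then b else rroot t,
   [ffun u => if u == a then Some b
              else if u == b then rpar t a
              else if rpar t u == Some b then
                     (if [exists w in desc t u, e a w] then Some a else Some b)
              else rpar t u]).

Definition rot_adj (e : rel V) (S : {set V}) (t1 t2 : rtree) : Prop :=
  search_tree e S t1 /\ search_tree e S t2 /\
  ((exists a b, rpar t1 b = Some a /\ t2 = rotate e t1 a b) \/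
   (exists a b, rpar t2 b = Some a /\ t1 = rotate e t2 a b)).

End Defs.

From mathcomp Require Import all_boot zify.
Set Implicit Arguments. Unset Strict Implicit. Unset Printing Implicit Defensive.

(* A rooted tree on S is a search tree on G[S] exactly when every subtree
   induces a connected subgraph and every edge of G[S] joins a vertex to one of
   its ancestors (conn_elim_tree). Let a_0, ..., a_d be the root-to-v path of T.
   In T(i,x,v) a subtree avoiding x is a subtree of T, and a subtree containing
   x is x plus a subtree of T containing v. As x is adjacent to v and every
   other neighbour of x is a neighbour of v, hence comparable with v in T, both
   conditions survive the insertion. Moreover, the rotation of x with its child
   a_i turns T(i,x,v) into T(i+1,x,v): among the children of a_i, only a_{i+1}
   has a neighbour of x in its subtree, since such a subtree must be comparable
   with v. *)

Section RootedTrees.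
Variable V : finType.
Implicit Types (t : rtree V) (u w z : V).

Lemma rtreeP t1 t2 : rroot t1 = rroot t2 -> rpar t1 =1 rpar t2 -> t1 = t2.
Proof. by case: t1 t2 => [r1 p1] [r2 p2] /= -> E; congr pair; apply/ffunP. Qed.

Lemma rroot_rotate e t a b : rroot (rotate e t a b) = if rroot t == a then b else rroot t.
Proof. by []. Qed.

Lemma rpar_rotate e t a b u : rpar (rotate e t a b) u =
  if u == a then Some b else if u == b then rpar t a
  else if rpar t u == Some b then
    (if [exists w in desc t u, e a w] then Some a else Some b)
  else rpar t u.
Proof. by rewrite /rpar ffunE. Qed.

Lemma upkS t k u : upk t k.+1 u = if rpar t u is Some p then upk t k p else None.
Proof.
elim: k u => [|k IH] u /=; first by case: (rpar t u).
by rewrite -/(upk t k.+1 u) IH; case: (rpar t u).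
Qed.

Lemma upkD t k m u : upk t (k + m) u = obind (upk t m) (upk t k u).
Proof. by elim: k u => [|k IH] u //; rewrite addSn !upkS; case: (rpar t u). Qed.

Lemma upk_noneW t k m u : k <= m -> upk t k u = None -> upk t m u = None.
Proof. by move=> /subnKC <- Hk; rewrite upkD Hk. Qed.

(* Pigeonhole: among more than #|V| iterated parents two coincide, and the loop
   between them can be cut out. *)
Lemma upk_shorten t k u w :
  upk t k u = Some w -> exists2 m, m <= #|V| & upk t m u = Some w.
Proof.
elim/ltn_ind: k => k IH Hk; case: (leqP k #|V|) => [le_kV|lt_Vk]; first by exists k.
pose f (j : 'I_k.+1) := upk t j u.
have /injectivePn [i [j neq_ij fij]] : ~~ injectiveb f.
  by apply/injectiveP => /leq_card; rewrite card_option card_ord; lia.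
wlog lt_ij : i j neq_ij fij / i < j.
  move=> W; case: (ltngtP i j) => [|lt_ji|/val_inj eq_ij]; first exact: W.
  - by apply: (W j i); rewrite // eq_sym.
  - by rewrite eq_ij eqxx in neq_ij.
have le_jk : j <= k by rewrite -ltnS.
apply: (IH (i + (k - j))); first lia.
by rewrite upkD [upk t i u]fij -upkD subnKC.
Qed.

Lemma descP t u w : reflect (exists k, upk t k u = Some w) (u \in desc t w).
Proof.
rewrite inE; apply: (iffP existsP) => [[k /eqP]|[k /upk_shorten [m le_mV Hm]]].
  by exists k.
by exists (Ordinal (le_mV : m < #|V|.+1)); apply/eqP.
Qed.

Lemma desc_refl t w : w \in desc t w.
Proof. by apply/descP; exists 0. Qed.

Lemma desc_trans t u w z : u \in desc t w -> w \in desc t z -> u \in desc t z.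
Proof.
by move=> /descP [k Hk] /descP [m Hm]; apply/descP; exists (k + m); rewrite upkD Hk.
Qed.

Lemma desc_par t u w p : rpar t u = Some p ->
  (u \in desc t w) = (u == w) || (p \in desc t w).
Proof.
move=> Hp; apply/descP/orP => [[[|k]]|[/eqP ->|/descP [k Hk]]].
- by move=> [->]; left.
- by rewrite upkS Hp => Hk; right; apply/descP; exists k.
- by exists 0.
- by exists k.+1; rewrite upkS Hp.
Qed.

Lemma desc_nopar t u w : rpar t u = None -> (u \in desc t w) = (u == w).
Proof.
move=> Hp; apply/descP/eqP => [[[|k]]|->]; last by exists 0.
- by move=> [->].
- by rewrite upkS Hp.
Qed.

Lemma desc_total t u a b : u \in desc t a -> u \in desc t b ->
  a \in desc t b \/ b \in desc t a.
Proof.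
move=> /descP [k Hk] /descP [m Hm]; case: (leqP k m) => [le_km|lt_mk].
  by left; apply/descP; exists (m - k); rewrite -Hm -[in RHS](subnKC le_km) upkD Hk.
right; apply/descP; exists (k - m).
by rewrite -Hk -[in RHS](subnKC (ltnW lt_mk)) upkD Hm.
Qed.

Lemma desc_vset t u w : u \in desc t w -> w \in vset t -> u \in vset t.
Proof.
case E: (rpar t u) => [p|]; first by move=> _ _; rewrite inE E orbT.
by rewrite desc_nopar // => /eqP ->.
Qed.

Lemma vset_desc t : is_rtree t -> vset t = desc t (rroot t).
Proof.
move=> [_ Ht]; apply/setP => u; apply/idP/idP => [/Ht /descP //|Hu].
by apply: (desc_vset Hu); rewrite inE eqxx.
Qed.

Lemma rtree_acyclic t u k : is_rtree t -> u \in vset t -> upk t k.+1 u <> Some u.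
Proof.
move=> [Hr Ht] /Ht [m Hm] Hcyc.
have iter_cyc j : upk t (j * k.+1) u = Some u.
  by elim: j => [|j IH] //; rewrite mulSn upkD Hcyc.
have : upk t (m.+1 * k.+1) u = None.
  by apply: (@upk_noneW _ m.+1); rewrite ?leq_pmulr // -addn1 upkD Hm /= Hr.
by rewrite iter_cyc.
Qed.

Lemma desc_antisym t u w : is_rtree t -> u \in vset t -> u \in desc t w ->
  w \in desc t u -> u = w.
Proof.
move=> Ht Hu /descP [[|k] Hk]; first by case: Hk.
move=> /descP [m Hm]; case: (rtree_acyclic (k := k + m) Ht Hu).
by rewrite -addSn upkD Hk.
Qed.

Lemma rpar_vset t u p : is_rtree t -> rpar t u = Some p -> p \in vset t.
Proof.
move=> Ht Hp; have : u \in vset t by rewrite inE Hp orbT.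
rewrite (vset_desc Ht) (desc_par _ Hp) => /orP [/eqP Hu|//].
by move: Hp; rewrite Hu (proj1 Ht).
Qed.

Lemma root_child_desc t u : u \in desc t (rroot t) -> u != rroot t ->
  exists2 c, rpar t c = Some (rroot t) & u \in desc t c.
Proof.
move=> /descP [[|k] /= Hk]; first by case: Hk => ->; rewrite eqxx.
move=> _; case E: (upk t k u) Hk => [c|] //= Hc.
by exists c => //; apply/descP; exists k.
Qed.

Lemma rpar_subtree t c u : rpar (subtree t c) u =
  if (u \in desc t c) && (u != c) then rpar t u else None.
Proof. by rewrite /rpar /subtree /= ffunE. Qed.

Lemma upk_subtree t c u k z : is_rtree t -> c \in vset t -> u \in desc t c ->
  (upk (subtree t c) k z = Some u <-> upk t k z = Some u /\ z \in desc t c).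
Proof.
move=> Ht Hc Hu; elim: k z => [|k IH] z; first by split => [[->]|[[->]]].
rewrite !upkS rpar_subtree; case: ifP => [/andP [Hz Hzc]|Hz].
  case E: (rpar t z) => [p|]; last by split => // [[]].
  rewrite IH; split => [[-> _]|[-> _]] //; split => //.
  by move: Hz; rewrite (desc_par _ E) (negbTE Hzc).
split=> // [[Hk Hzd]]; move: Hz; rewrite Hzd /= => /negbFE /eqP Hzc; subst z.
have Hcu : c \in desc t u by apply/descP; exists k.+1; rewrite upkS.
have Huc := desc_antisym Ht Hc Hcu Hu; subst u.
by case: (rtree_acyclic (k := k) Ht Hc); rewrite upkS.
Qed.

Lemma desc_subtree t c u : is_rtree t -> c \in vset t -> u \in desc t c ->
  desc (subtree t c) u = desc t u.
Proof.
move=> Ht Hc Hu; apply/setP => z; apply/descP/descP => [[k]|[k Hk]].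
  by move=> /(upk_subtree _ _ Ht Hc Hu) [Hk _]; exists k.
exists k; apply/(upk_subtree _ _ Ht Hc Hu); split => //.
by apply: (desc_trans _ Hu); apply/descP; exists k.
Qed.

Lemma vset_subtree t c : is_rtree t -> c \in vset t -> vset (subtree t c) = desc t c.
Proof.
move=> Ht Hc; apply/setP => u; rewrite [in LHS]inE rpar_subtree /=.
case: (eqVneq u c) => [->|Huc]; first by rewrite desc_refl.
rewrite andbT /=; case Hd: (u \in desc t c) => //.
by case E: (rpar t u) => //; move: Hd; rewrite desc_nopar // (negbTE Huc).
Qed.

Lemma rtree_subtree t c : is_rtree t -> c \in vset t -> is_rtree (subtree t c).
Proof.
move=> Ht Hc; split; first by rewrite rpar_subtree /= eqxx andbF.
move=> u; rewrite vset_subtree // => /descP [k Hk]; exists k.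
by apply/(upk_subtree _ _ Ht Hc (desc_refl _ _)); split => //; apply/descP; exists k.
Qed.

Lemma ups_upk t n u k : rpar t (rroot t) = None -> upk t k u = Some (rroot t) ->
  k <= n ->
  size (ups t n u) = k.+1 /\ forall j, j <= k -> upk t j u = Some (nth u (ups t n u) j).
Proof.
move=> Hr; elim: n u k => [|n IH] u k Hk Hkn.
  by move: Hkn Hk; rewrite leqn0 => /eqP ->; split => // j; rewrite leqn0 => /eqP ->.
rewrite /=; case E: (rpar t u) => [w|]; case: k Hk Hkn => [|k] Hk Hkn.
- by move: Hk E => [->]; rewrite Hr.
- rewrite upkS E in Hk; have [Hs Hn] := IH w k Hk Hkn.
  split; first by rewrite /= Hs.
  move=> [|j] Hj //; rewrite upkS E /= (Hn j Hj); congr Some.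
  by apply: set_nth_default; rewrite Hs.
- by split => // j; rewrite leqn0 => /eqP ->.
- by rewrite upkS E in Hk.
Qed.

End RootedTrees.

Section Connectivity.
Variables (V : finType) (e : rel V).
Hypothesis esym : symmetric e.
Implicit Types (C D S : {set V}).

Lemma connect_restrict_sub C D a b : C \subset D ->
  connect (restrict_rel e C) a b -> connect (restrict_rel e D) a b.
Proof.
move=> sCD; apply: connect_sub => y z /and3P [Hyz Hy Hz].
by apply: connect1; apply/and3P; split => //; apply: (subsetP sCD).
Qed.

Lemma connU C D u : conn e C -> conn e D -> u \in C -> u \in D -> conn e (C :|: D).
Proof.
move=> HC HD HuC HuD a b.
have [sC sD] := (subsetUl C D, subsetUr C D).
rewrite !inE => /orP [Ha|Ha] /orP [Hb|Hb].
- exact: connect_restrict_sub sC (HC _ _ Ha Hb).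
- apply: (connect_trans (connect_restrict_sub sC (HC _ _ Ha HuC))).
  exact: connect_restrict_sub sD (HD _ _ HuD Hb).
- apply: (connect_trans (connect_restrict_sub sD (HD _ _ Ha HuD))).
  exact: connect_restrict_sub sC (HC _ _ HuC Hb).
- exact: connect_restrict_sub sD (HD _ _ Ha Hb).
Qed.

Lemma conn2 a b : e a b -> conn e [set a; b].
Proof.
move=> Hab y z /set2P [] -> /set2P [] ->; try exact: connect0;
  by apply: connect1; apply/and3P; rewrite !inE !eqxx ?orbT // esym.
Qed.

Lemma conn_setD1 D y z : e y z -> (y \in D -> z \in D :\ y) ->
  conn e (D :\ y) -> conn e D.
Proof.
move=> yz zDy connDy; have [yD|yD] := boolP (y \in D); last first.
  suff <- : D :\ y = D by [].
  by apply/setP => u; rewrite in_setD1; case: eqVneq => // ->; rewrite (negbTE yD).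
have -> : D = [set y; z] :|: (D :\ y).
  apply/setP => u; rewrite !inE; case: (eqVneq u y) => [->|_]; rewrite ?yD //=.
  by case: (eqVneq u z) => [->|] //=; case/setD1P: (zDy yD).
exact: connU (conn2 yz) connDy (set22 y z) (zDy yD).
Qed.

Lemma restrict_connect_closed C (P : {set V}) a b :
  (forall y z, y \in P -> z \in C -> e y z -> z \in P) ->
  connect (restrict_rel e C) a b -> a \in P -> b \in P.
Proof.
move=> Pcl /connectP [p Hp ->]; elim: p a Hp => [|z p IH] a //= /andP [].
by move=> /and3P [Haz _ Hz] Hp Ha; apply: IH Hp (Pcl _ _ Ha Hz Haz).
Qed.

Lemma component_eq S C D u : component e S C -> component e S D ->
  u \in C -> u \in D -> C = D.
Proof.
move=> [sCS _ HC maxC] [sDS _ HD maxD] HuC HuD.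
have HCD := connU HC HD HuC HuD.
have sCDS : C :|: D \subset S by rewrite subUset sCS sDS.
by rewrite -(maxC _ (subsetUl C D) sCDS HCD) (maxD _ (subsetUr C D) sCDS HCD).
Qed.

Lemma component_edge_closed S C a b : component e S C ->
  a \in C -> b \in S -> e a b -> b \in C.
Proof.
move=> [sCS _ HC maxC] Ha Hb Hab.
have sCabS : C :|: [set a; b] \subset S.
  by rewrite subUset sCS subUset !sub1set (subsetP sCS).
rewrite -(maxC _ (subsetUl _ _) sCabS (connU HC (conn2 Hab) Ha (set21 a b))).
by rewrite !inE eqxx !orbT.
Qed.

End Connectivity.

Section SearchTrees.
Variables (V : finType) (e : rel V).
Hypothesis esym : symmetric e.
Implicit Types (S : {set V}) (t : rtree V).

Definition conn_elim_tree S t :=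
  [/\ is_rtree t, vset t = S, {in S, forall u, conn e (desc t u)} &
      {in S &, forall a b, e a b -> a \in desc t b \/ b \in desc t a}].

Lemma conn_elim_subtree S t c : conn_elim_tree S t -> c \in S ->
  conn_elim_tree (desc t c) (subtree t c).
Proof.
move=> [rt vt connD edges] cS; have cv : c \in vset t by rewrite vt.
have sub u : u \in desc t c -> u \in S by move=> uc; rewrite -vt (desc_vset uc cv).
split; [exact: rtree_subtree | exact: vset_subtree | |].
- by move=> u uc; rewrite desc_subtree //; apply/connD/sub.
- by move=> a b ac bc ab; rewrite !desc_subtree //; apply: edges => //; apply: sub.
Qed.

Lemma conn_elim_child_component S t c : conn_elim_tree S t ->
  rpar t c = Some (rroot t) -> component e (S :\ rroot t) (desc t c).
Proof.
move=> [rt vt connD edges] Hc; set r := rroot t in Hc *.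
have cv : c \in vset t by rewrite inE Hc orbT.
have anc_c z : (c \in desc t z) = (c == z) || (r == z).
  by rewrite (desc_par _ Hc) (desc_nopar _ (proj1 rt)).
have sub_c : desc t c \subset S :\ r.
  apply/subsetP => z zc; rewrite in_setD1 -vt (desc_vset zc cv) andbT.
  apply: contraTneq zc => ->; rewrite (desc_nopar _ (proj1 rt)).
  by apply/eqP => rc; move: Hc; rewrite -rc (proj1 rt).
split=> //; [by apply/set0Pn; exists c; apply: desc_refl | by apply: connD; rewrite -vt |].
move=> D sD sDS connDD; apply/eqP; rewrite eqEsubset sD andbT.
apply/subsetP => z zD; have cD := subsetP sD _ (desc_refl t c).
apply: (restrict_connect_closed _ (connDD c z cD zD) (desc_refl t c)).
move=> y z' yc z'D e_yz.
have /setD1P [z'r z'S] := subsetP sDS z' z'D.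
have /setD1P [_ yS] := subsetP sub_c y yc.
case: (edges y z' yS z'S e_yz) => [yz'|z'y]; last exact: desc_trans z'y yc.
case: (desc_total yc yz') => //; rewrite anc_c => /orP [/eqP <-|/eqP rz'].
  exact: desc_refl.
by rewrite -rz' eqxx in z'r.
Qed.

Lemma conn_elim_search_tree S t : conn_elim_tree S t -> search_tree e S t.
Proof.
have [n] := ubnP #|S|; elim: n S t => [//|n IHn] S t ltSn tS.
have [rt vt connD _] := tS; set r := rroot t.
have rdesc : desc t r = S by rewrite -vset_desc.
have rS : r \in S by rewrite -vt inE eqxx.
refine (SearchTree rt vt _ _ _).
- by move: (connD r rS); rewrite rdesc.
- move=> c Hc; have compc := conn_elim_child_component tS Hc.
  split; first exact: compc.
  apply: IHn; last by apply: (conn_elim_subtree tS); rewrite -vt inE Hc orbT.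
  have [sub _ _ _] := compc; rewrite (cardsD1 r) rS add1n ltnS in ltSn.
  exact: leq_ltn_trans (subset_leq_card sub) ltSn.
- move=> C compC; have [sCS /set0Pn [u uC] _ _] := compC.
  have /setD1P [ur uS] := subsetP sCS u uC.
  have [c Hc uc] : exists2 c, rpar t c = Some r & u \in desc t c.
    by apply: root_child_desc ur; rewrite rdesc.
  by exists c; split => //; apply: component_eq (conn_elim_child_component tS Hc) compC uc uC.
Qed.

Lemma search_tree_conn_elim S t : search_tree e S t -> conn_elim_tree S t.
Proof.
have [n] := ubnP #|S|; elim: n S t => [//|n IHn] S t ltSn tS.
case: tS ltSn => {}S {}t rt vt connS children _ ltSn; set r := rroot t.
have rdesc : desc t r = S by rewrite -vset_desc.
have rS : r \in S by rewrite -vt inE eqxx.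
have child_of u : u \in S -> u != r -> exists2 c, rpar t c = Some r & u \in desc t c.
  by move=> uS; apply: root_child_desc; rewrite rdesc.
have child_tree c : rpar t c = Some r ->
    conn_elim_tree (desc t c) (subtree t c) /\ component e (S :\ r) (desc t c).
  move=> Hc; have [compc stc] := children c Hc; split; last exact: compc.
  apply: IHn stc.
  have [sub _ _ _] := compc; rewrite (cardsD1 r) rS add1n ltnS in ltSn.
  exact: leq_ltn_trans (subset_leq_card sub) ltSn.
split => //.
- move=> u uS; case: (eqVneq u r) => [->|ur]; first by rewrite rdesc.
  have [c Hc uc] := child_of u uS ur; have [[_ _ connc _] _] := child_tree c Hc.
  have cv : c \in vset t by rewrite inE Hc orbT.
  by rewrite -(desc_subtree rt cv uc); apply: connc.
- move=> a b aS bS ab.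
  case: (eqVneq a r) => [->|ar]; first by right; rewrite rdesc.
  case: (eqVneq b r) => [->|br]; first by left; rewrite rdesc.
  have [c Hc ac] := child_of a aS ar; have [[_ _ _ edgesc] compc] := child_tree c Hc.
  have bSr : b \in S :\ r by rewrite in_setD1 br.
  have bc : b \in desc t c := component_edge_closed esym compc ac bSr ab.
  have cv : c \in vset t by rewrite inE Hc orbT.
  by rewrite -(desc_subtree rt cv ac) -(desc_subtree rt cv bc); apply: edgesc.
Qed.

End SearchTrees.

Section RootPath.
Variables (V : finType) (t : rtree V) (v : V).
Hypotheses (rt : is_rtree t) (vt : v \in vset t).

Local Notation a j := (nth v (rpath t v) j).
Local Notation d := (depth t v).
Local Notation r := (rroot t).

Let rpar_root : rpar t r = None. Proof. exact: proj1 rt. Qed.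

Lemma rpath_upk : upk t d v = Some r /\ forall j, j <= d -> upk t (d - j) v = Some (a j).
Proof.
have : v \in desc t r by rewrite -vset_desc.
rewrite inE => /existsP [k /eqP Hk].
have [size_ups ups_k] := ups_upk (n := #|V|) rpar_root Hk (ltnSE (ltn_ord k)).
have -> : d = k by rewrite /depth /rpath size_rev size_ups.
split => // j le_jk; rewrite /rpath nth_rev size_ups ?ltnS // subSS.
exact/ups_k/leq_subr.
Qed.

Lemma rpath0 : a 0 = r.
Proof. by case: rpath_upk => H /(_ 0 (leq0n d)); rewrite subn0 H => [[]]. Qed.

Lemma rpath_last : a d = v.
Proof. by case: rpath_upk => _ /(_ d (leqnn d)); rewrite subnn => [[]]. Qed.

Lemma upk_rpath j l : j <= l -> l <= d -> upk t (l - j) (a l) = Some (a j).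
Proof.
move=> le_jl le_ld; have [_ upk_a] := rpath_upk.
have := upk_a j (leq_trans le_jl le_ld).
have -> : d - j = (d - l) + (l - j) by lia.
by rewrite upkD upk_a.
Qed.

Lemma rpath_desc j l : j <= l -> l <= d -> a l \in desc t (a j).
Proof. by move=> le_jl le_ld; apply/descP; exists (l - j); apply: upk_rpath. Qed.

Lemma v_desc_rpath j : j <= d -> v \in desc t (a j).
Proof. by move=> le_jd; rewrite -{1}rpath_last; apply: rpath_desc. Qed.

Lemma rpath_vset j : j <= d -> a j \in vset t.
Proof. by move=> le_jd; rewrite (vset_desc rt) -rpath0; apply: rpath_desc. Qed.

Lemma rpar_rpath j : j < d -> rpar t (a j.+1) = Some (a j).
Proof. by move=> lt_jd; have := upk_rpath (leqnSn j) lt_jd; rewrite subSnn. Qed.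

Lemma rpath_inj j l : j <= d -> l <= d -> a j = a l -> j = l.
Proof.
wlog le_jl : j l / j <= l.
  move=> W le_jd le_ld E; case: (leqP j l) => [le_jl|/ltnW le_lj]; first exact: W.
  by symmetry; apply: W.
move=> _ le_ld E; move: le_jl; rewrite leq_eqVlt => /orP [/eqP //|lt_jl].
have := upk_rpath (ltnW lt_jl) le_ld; rewrite E.
have -> : l - j = (l - j).-1.+1 by lia.
by move/(rtree_acyclic rt (rpath_vset le_ld)).
Qed.

Lemma desc_v_rpath b : v \in desc t b -> exists2 j, j <= d & b = a j.
Proof.
move=> /descP [m Hm]; have [upk_root upk_a] := rpath_upk.
case: (leqP m d) => [le_md|lt_dm].
  exists (d - m); first exact: leq_subr.
  by move: (upk_a _ (leq_subr m d)); rewrite subKn // Hm => [[]].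
have [k E] : exists k, m = d + k.+1 by exists (m - d).-1; lia.
rewrite E upkD upk_root in Hm.
by change (upk t k.+1 r = Some b) in Hm; rewrite upkS rpar_root in Hm.
Qed.

Lemma rpath_child i u : i < d -> rpar t u = Some (a i) ->
  v \in desc t u \/ u \in desc t v -> u = a i.+1.
Proof.
move=> lt_id Hu [/desc_v_rpath [j le_jd uE]|uv].
  move: Hu; rewrite uE; case: j le_jd {uE} => [|j] le_jd; first by rewrite rpath0 rpar_root.
  by rewrite rpar_rpath // => -[/(rpath_inj (ltnW le_jd) (ltnW lt_id)) ->].
have : u \in desc t (a i.+1) by apply: desc_trans uv (v_desc_rpath _).
rewrite (desc_par _ Hu) => /orP [/eqP //|ai_desc].
have := desc_antisym rt (rpath_vset (ltnW lt_id)) ai_desc (rpath_desc (leqnSn i) lt_id).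
by move/(rpath_inj (ltnW lt_id) lt_id); lia.
Qed.

End RootPath.

Section Insertion.
Variables (V : finType) (e : rel V) (x v : V) (t : rtree V).
Hypotheses (esym : symmetric e) (eirr : irreflexive e) (xv : x != v)
  (nbhd_xv : closed_nbhd e x \subset closed_nbhd e v)
  (st_t : search_tree e [set~ x] t).

Local Notation a j := (nth v (rpath t v) j).
Local Notation d := (depth t v).
Local Notation r := (rroot t).
Local Notation T i := (insert t i x v).

Let ce_t : conn_elim_tree e [set~ x] t := search_tree_conn_elim esym st_t.
Let rt : is_rtree t. Proof. by case: ce_t. Qed.
Let rpar_root : rpar t r = None. Proof. exact: proj1 rt. Qed.
Let in_t u : (u \in vset t) = (u != x). Proof. by case: ce_t => _ -> _ _; rewrite !inE. Qed.
Let vt : v \in vset t. Proof. by rewrite in_t eq_sym. Qed.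

Lemma edge_xv : e x v.
Proof.
have : x \in closed_nbhd e v by apply: (subsetP nbhd_xv); rewrite inE eqxx.
by rewrite inE (negbTE xv) esym.
Qed.

Lemma nbr_x_comparable_v w : w != x -> e x w -> v \in desc t w \/ w \in desc t v.
Proof.
move=> wx xw; have : w \in closed_nbhd e v by apply: (subsetP nbhd_xv); rewrite inE xw orbT.
rewrite inE => /orP [/eqP ->|vw]; first by left; apply: desc_refl.
have vS : v \in [set~ x] by rewrite !inE eq_sym.
have wS : w \in [set~ x] by rewrite !inE.
by have [_ _ _ edges] := ce_t; apply: edges vS wS vw.
Qed.

Lemma rpath_neq_x j : j <= d -> a j != x.
Proof. by rewrite -in_t; apply: (rpath_vset rt vt). Qed.

Lemma child_nbr_x i u : i < d -> rpar t u = Some (a i) ->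
  [exists w in desc t u, e x w] = (u == a i.+1).
Proof.
move=> lt_id Hu; apply/existsP/eqP => [[w /andP [wu xw]]|->].
  apply: (rpath_child rt vt) Hu _ => //.
  have wx : w != x by apply: contraTneq xw => ->; rewrite eirr.
  case: (nbr_x_comparable_v wx xw) => [vw|wv]; first by left; apply: desc_trans vw wu.
  by case: (desc_total wu wv); [right|left].
by exists v; rewrite (v_desc_rpath rt vt) // edge_xv.
Qed.

Lemma insert_root i : rroot (T i) = if i == 0 then x else r.
Proof. by rewrite /insert; case: ifP. Qed.

Lemma insert_rpar i u : rpar (T i) u =
  if u == x then (if i == 0 then None else Some (a i.-1))
  else if u == a i then Some x else rpar t u.
Proof.
by rewrite /insert; case: (eqVneq i 0) => [->|] /=; rewrite /rpar /= ffunE ?(rpath0 rt vt).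
Qed.

Let rpar_x : rpar t x = None.
Proof. by apply/eqP; have := in_t x; rewrite eqxx inE => /norP [_ /negPn]. Qed.

Let root_neq_x : r != x.
Proof. by rewrite -in_t inE eqxx. Qed.

Section FixedPosition.
Variable i : nat.
Hypothesis le_id : i <= d.

Lemma insert_desc u w : u != x ->
  (u \in desc (T i) w) = if w == x then u \in desc t (a i) else u \in desc t w.
Proof.
pose P u := forall w,
  (u \in desc (T i) w) = if w == x then u \in desc t (a i) else u \in desc t w.
suff step z : z != x -> (forall p, rpar t z = Some p -> P p) -> P z.
  move=> ux; move: w; have /(proj2 rt) [k] : u \in vset t by rewrite in_t.
  elim: k u ux => [|k IH] u ux Hk; apply: step => // p Hp.
    by move: Hk Hp => [->]; rewrite rpar_root.
  apply: IH; last by rewrite upkS Hp in Hk.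
  by rewrite -in_t; apply: rpar_vset rt Hp.
move=> zx IHp y; case: (eqVneq z (a i)) => [zai|zai].
  have HpT : rpar (T i) z = Some x by rewrite insert_rpar (negbTE zx) zai eqxx.
  rewrite (desc_par _ HpT) -zai desc_refl.
  case: (eqVneq y x) => [->|yx]; first by rewrite desc_refl orbT.
  have xy : (x == y) = false by rewrite eq_sym (negbTE yx).
  case: (eqVneq i 0) => [i0|i0].
    have HxT : rpar (T i) x = None by rewrite insert_rpar eqxx i0.
    by rewrite (desc_nopar _ HxT) xy orbF zai i0 (rpath0 rt vt) (desc_nopar _ rpar_root).
  have HxT : rpar (T i) x = Some (a i.-1) by rewrite insert_rpar eqxx (negbTE i0).
  have Hz : rpar t z = Some (a i.-1).
    by rewrite zai -{1}(prednK (_ : 0 < i)) ?(rpar_rpath rt vt) ?prednK ?lt0n.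
  by rewrite (desc_par _ HxT) (IHp _ Hz) (desc_par _ Hz) xy (negbTE yx).
have HpT : rpar (T i) z = rpar t z by rewrite insert_rpar (negbTE zx) (negbTE zai).
have [yx|yx] := eqVneq y x; case Hz: (rpar t z) HpT => [p|] HpT.
- by rewrite (desc_par _ HpT) (desc_par _ Hz) (IHp _ Hz) yx eqxx (negbTE zx) (negbTE zai).
- by rewrite (desc_nopar _ HpT) (desc_nopar _ Hz) yx (negbTE zx) (negbTE zai).
- by rewrite (desc_par _ HpT) (desc_par _ Hz) (IHp _ Hz) (negbTE yx).
- by rewrite (desc_nopar _ HpT) (desc_nopar _ Hz).
Qed.

Lemma insert_desc_neq_x u w : u != x -> w != x -> (u \in desc (T i) w) = (u \in desc t w).
Proof. by move=> ux wx; rewrite insert_desc // (negbTE wx). Qed.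

Lemma insert_desc_x w : (x \in desc (T i) w) = (w == x) || (0 < i) && (a i.-1 \in desc t w).
Proof.
case: (eqVneq i 0) => [i0|i0].
  have HxT : rpar (T i) x = None by rewrite insert_rpar eqxx i0.
  by rewrite (desc_nopar _ HxT) i0 orbF eq_sym.
have HxT : rpar (T i) x = Some (a i.-1) by rewrite insert_rpar eqxx (negbTE i0).
rewrite (desc_par _ HxT) insert_desc ?rpath_neq_x ?(leq_trans (leq_pred i)) //.
by case: (eqVneq w x) => //=; rewrite lt0n i0.
Qed.

Lemma v_desc_insert_x : v \in desc (T i) x.
Proof. by rewrite insert_desc 1?eq_sym // eqxx (v_desc_rpath rt vt). Qed.

Lemma insert_desc_setD1 w : desc (T i) w :\ x = desc t (if w == x then a i else w).
Proof.
apply/setP => z; rewrite in_setD1; case: (eqVneq z x) => [->|zx] /=.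
  rewrite (desc_nopar _ rpar_x) eq_sym; symmetry; apply/negbTE.
  by case: (eqVneq w x) => [_|//]; apply: rpath_neq_x.
by rewrite insert_desc //; case: eqP.
Qed.

Lemma insert_desc_conn w : conn e (desc (T i) w).
Proof.
apply: (conn_setD1 esym edge_xv).
  by move=> xw; rewrite in_setD1 eq_sym xv (desc_trans v_desc_insert_x xw).
have [_ _ connD _] := ce_t; rewrite insert_desc_setD1; apply: connD.
by rewrite !inE; case: (eqVneq w x) => [_|//]; apply: rpath_neq_x.
Qed.

Lemma insert_edge_x c : c != x -> e x c -> x \in desc (T i) c \/ c \in desc (T i) x.
Proof.
move=> cx xc; rewrite insert_desc_x insert_desc // eqxx (negbTE cx) /=.
case: (nbr_x_comparable_v cx xc) => [/(desc_v_rpath rt vt) [j le_jd ->]|cv].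
  case: (leqP i j) => [le_ij|lt_ji]; first by right; apply: (rpath_desc rt vt).
  by left; apply/andP; split; [lia | apply: (rpath_desc rt vt); lia].
by right; apply: desc_trans cv (v_desc_rpath rt vt le_id).
Qed.

Lemma insert_desc_root u : u \in desc (T i) (rroot (T i)).
Proof.
rewrite insert_root; case: (eqVneq i 0) => [i0|i0].
  case: (eqVneq u x) => [->|ux]; first exact: desc_refl.
  by rewrite insert_desc // eqxx i0 (rpath0 rt vt) -(vset_desc rt) in_t.
case: (eqVneq u x) => [->|ux].
  rewrite insert_desc_x (negbTE root_neq_x) lt0n i0 -(rpath0 rt vt).
  by rewrite (rpath_desc rt vt) //; lia.
by rewrite insert_desc_neq_x // -(vset_desc rt) in_t.
Qed.

Lemma insert_conn_elim : conn_elim_tree e [set: V] (T i).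
Proof.
split.
- split=> [|u _]; last exact/descP/insert_desc_root.
  rewrite insert_root; case: (eqVneq i 0) => [->|i0]; first by rewrite insert_rpar eqxx.
  have r_ai : r != a i.
    by rewrite -(rpath0 rt vt); apply: contra_neq i0 => /(rpath_inj rt vt (leq0n d) le_id) <-.
  by rewrite insert_rpar (negbTE root_neq_x) (negbTE r_ai) rpar_root.
- by apply/setP => u; rewrite in_setT (desc_vset (insert_desc_root u)) // inE eqxx.
- by move=> w _; apply: insert_desc_conn.
move=> b c _ _ bc.
have [bx|bx] := eqVneq b x.
  by rewrite bx; apply: insert_edge_x; rewrite -?bx //; apply: contraTneq bc => ->; rewrite bx eirr.
have [cx|cx] := eqVneq c x.
  by rewrite cx in bc *; rewrite esym in bc; case: (insert_edge_x bx bc); [right|left].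
have [_ _ _ edges] := ce_t; rewrite !insert_desc_neq_x //.
by apply: edges bc; rewrite !inE.
Qed.

Lemma insert_search_tree : search_tree e [set: V] (T i).
Proof. exact: conn_elim_search_tree insert_conn_elim. Qed.

End FixedPosition.

Lemma rotate_insert i : i < d -> rotate e (T i) x (a i) = T i.+1.
Proof.
move=> lt_id; have le_id := ltnW lt_id.
apply: rtreeP => [|u].
  rewrite rroot_rotate !insert_root.
  by case: (eqVneq i 0) => [->|i0]; rewrite ?eqxx ?(rpath0 rt vt) // (negbTE root_neq_x).
rewrite rpar_rotate !insert_rpar eqxx /=; case: (eqVneq u x) => // ux.
have [->|uai] := eqVneq u (a i).
  have -> : (a i == a i.+1) = false by apply/eqP => /(rpath_inj rt vt le_id lt_id); lia.
  case: (eqVneq i 0) => [->|i0]; first by rewrite (rpath0 rt vt) rpar_root.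
  by rewrite -{2}(prednK (_ : 0 < i)) ?(rpar_rpath rt vt) ?prednK ?lt0n.
have [Hu|Hu] := eqVneq (rpar t u) (Some (a i)).
  have -> : [exists w in desc (T i) u, e x w] = [exists w in desc t u, e x w].
    apply: eq_existsb => w; case: (eqVneq w x) => [->|wx]; first by rewrite eirr !andbF.
    by rewrite insert_desc_neq_x.
  by rewrite (child_nbr_x lt_id Hu); case: eqVneq.
by case: eqVneq => // uai1; move: Hu; rewrite uai1 (rpar_rpath rt vt) // eqxx.
Qed.

Lemma insert_rot_adj i : i < d -> rot_adj e [set: V] (T i) (T i.+1).
Proof.
move=> lt_id; have le_id := ltnW lt_id.
split; [exact: insert_search_tree | split; first exact: insert_search_tree].
left; exists x, (a i); split; last by rewrite rotate_insert.
by rewrite insert_rpar (negbTE (rpath_neq_x le_id)) eqxx.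
Qed.

Lemma insert_uniq : uniq [seq T i | i <- iota 0 d.+1].
Proof.
rewrite map_inj_in_uniq ?iota_uniq // => i j.
rewrite !mem_iota !add0n !ltnS => /andP [_ le_id] /andP [_ le_jd] Tij.
have := congr1 (fun s : rtree V => rpar s x) Tij; rewrite /= !insert_rpar eqxx.
case: i j le_id le_jd {Tij} => [|i] [|j] //= le_id le_jd [].
by move/(rpath_inj rt vt (ltnW le_id) (ltnW le_jd)) ->.
Qed.

End Insertion.

Theorem lemma2p2 (V : finType) (e : rel V) (esym : symmetric e)
    (eirr : irreflexive e) (x v : V) :
  conn e [set: V] -> x != v -> closed_nbhd e x \subset closed_nbhd e v ->
  forall t : rtree V, search_tree e [set~ x] t ->
  (forall i, i <= depth t v -> search_tree e [set: V] (insert t i x v)) /\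
  (exists s : seq (rtree V),
     uniq s /\
     (forall u, u \in s -> search_tree e [set: V] u) /\
     (forall j, j.+1 < size s -> rot_adj e [set: V] (nth t s j) (nth t s j.+1)) /\
     (forall i, i <= depth t v -> insert t i x v \in s)).
Proof.
move=> _ xv nbhd_xv t st_t.
have st_T := insert_search_tree esym eirr xv nbhd_xv st_t.
pose s := [seq insert t i x v | i <- iota 0 (depth t v).+1].
have mem_s i : (i \in iota 0 (depth t v).+1) = (i <= depth t v).
  by rewrite mem_iota add0n ltnS.
have nth_s j : j <= depth t v -> nth t s j = insert t j x v.
  by move=> le_jd; rewrite (nth_map 0) ?nth_iota ?size_iota.
split; first exact: st_T.
exists s; split; [|split; [|split]].
- exact: insert_uniq esym xv st_t.
- by move=> u /mapP [i]; rewrite mem_s => le_id ->; apply: st_T.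
- move=> j; rewrite size_map size_iota ltnS => lt_jd.
  rewrite (nth_s _ (ltnW lt_jd)) (nth_s _ lt_jd).
  exact: insert_rot_adj esym eirr xv nbhd_xv st_t _ lt_jd.
- by move=> i le_id; apply/mapP; exists i; rewrite ?mem_s.
Qed.
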